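(* Let $\Delta$ be a finite domain, $\mathcal{L}$ a first-order language, $R$ a binary and $A$ a unary predicate of $\mathcal{L}$, $k$ an integer with $0\le k\le|\Delta|$, $\Gamma$ a first-order sentence over $\mathcal{L}$, and $\Upsilon$ a conjunction (over $\mathcal{L}$) of constraints of the forms $\forall x\,\exists_{=c}y:\psi(x,y)$, $\exists_{=c}x\,\forall y:\psi(x,y)$ and cardinality constraints. Let $U^R$ (unary) and $B^R$ (binary) be new predicates not in $\mathcal{L}$, with all their weights equal to $1$, and let $\Omega_{\mathrm{ext}}$ be the set of possible worlds on $\Delta$ w.r.t. $\mathcal{L}$ extended by $U^R,B^R$. Define $\Phi=\Phi_1\wedge\Phi_2\wedge\Phi_3\wedge\Phi_4$ with $\Phi_1=\forall x\,\exists_{=k}y:B^R(x,y)$, $\Phi_2=(|U^R|=k)$, $\Phi_3=\forall x\forall y:(A(x)\wedge B^R(x,y))\Rightarrow U^R(y)$, $\Phi_4=\forall x\forall y:\neg A(x)\Rightarrow(R(x,y)\Leftrightarrow B^R(x,y))$. Then for all weight functions $w,\overline{w}$, $$\mathrm{WFOMC}\big(\Gamma\wedge\Upsilon\wedge(\forall x:A(x)\vee(\exists_{=k}y:R(x,y))),w,\overline{w},\Delta\big)=\binom{|\Delta|}{k}^{-1}\mathrm{WFOMC}(\Gamma\wedge\Upsilon\wedge\Phi,w,\overline{w},\Omega_{\mathrm{ext}}),$$ where the left-hand side is taken over all possible worlds on $\Delta$ w.r.t. $\mathcal{L}$.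
   Context: A possible world on $\Delta$ is a set of ground atoms over the language's predicates and $\Delta$. $N(R,\omega)$ is the number of ground atoms of $R$ true in $\omega$. For a set $\Omega$ of possible worlds, $\mathrm{WFOMC}(\Gamma,w,\overline{w},\Omega)=\sum_{\omega\in\Omega,\,\omega\models\Gamma}\prod_{R} w(R)^{N(R,\omega)}\overline{w}(R)^{|\Delta|^{\mathrm{arity}(R)}-N(R,\omega)}$, the product ranging over the predicates of the language of $\Omega$; $\mathrm{WFOMC}(\cdot,\cdot,\cdot,\Delta)$ uses all possible worlds on $\Delta$. A cardinality constraint $|S|=c$ holds iff $N(S,\omega)=c$. $\exists_{=k}y\,\psi(y)$ holds iff exactly $k$ distinct elements of $\Delta$ satisfy $\psi$. *)

From HB Require Import structures.
From mathcomp Require Import all_boot all_order all_algebra.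
Set Implicit Arguments. Unset Strict Implicit. Unset Printing Implicit Defensive.
Import Order.TTheory GRing.Theory Num.Theory.

Record signature := Signature { psym : finType; ar : psym -> nat }.

(* Formulas with counting quantifiers and cardinality constraints.
   Variables are de Bruijn indices: index 0 is the innermost bound variable. *)
Inductive fo_form (S : signature) : Type :=
  | FTrue
  | FAtom (p : psym S) (vs : seq nat)
  | FEq (i j : nat)
  | FNot (f : fo_form S)
  | FAnd (f g : fo_form S)
  | FOr (f g : fo_form S)
  | FExists (f : fo_form S)
  | FForall (f : fo_form S)
  | FCnt (c : nat) (f : fo_form S)
  | FCard (p : psym S) (c : nat).
Arguments FTrue {S}.
Arguments FEq {S}.

Definition FImp S (f g : fo_form S) := FOr (FNot f) g.
Definition FIff S (f g : fo_form S) := FAnd (FImp f g) (FImp g f).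

Definition gatom (S : signature) (D : finType) : finType :=
  {p : psym S & (ar p).-tuple D}.
Definition world (S : signature) (D : finType) := {set gatom S D}.

Definition Ncount S (D : finType) (w : world S D) (p : psym S) : nat :=
  #|[set t : (ar p).-tuple D | Tagged (fun q => (ar q).-tuple D) t \in w]|.

Fixpoint holds S (D : finType) (w : world S D) (e : seq D) (f : fo_form S) : bool :=
  match f with
  | FTrue => true
  | FAtom p vs => [exists t : (ar p).-tuple D,
                    (map Some (val t) == map (onth e) vs)
                    && (Tagged (fun q => (ar q).-tuple D) t \in w)]
  | FEq i j => (onth e i == onth e j) && (onth e i != None)
  | FNot g => ~~ holds w e g
  | FAnd g h => holds w e g && holds w e h
  | FOr g h => holds w e g || holds w e h
  | FExists g => [exists d : D, holds w (d :: e) g]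
  | FForall g => [forall d : D, holds w (d :: e) g]
  | FCnt c g => #|[set d : D | holds w (d :: e) g]| == c
  | FCard p c => Ncount w p == c
  end.

Fixpoint wf_bound S (n : nat) (f : fo_form S) : bool :=
  match f with
  | FTrue => true
  | FAtom p vs => (size vs == ar p) && all (fun i => i < n) vs
  | FEq i j => (i < n) && (j < n)
  | FNot g => wf_bound n g
  | FAnd g h | FOr g h => wf_bound n g && wf_bound n h
  | FExists g | FForall g | FCnt _ g => wf_bound n.+1 g
  | FCard _ _ => true
  end.

Fixpoint is_FO S (f : fo_form S) : bool :=
  match f with
  | FTrue | FAtom _ _ | FEq _ _ => true
  | FNot g | FExists g | FForall g => is_FO g
  | FAnd g h | FOr g h => is_FO g && is_FO h
  | FCnt _ _ | FCard _ _ => false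
  end.

Definition FO_sentence S (f : fo_form S) := is_FO f && wf_bound 0 f.

(* Constraints allowed in Upsilon.  In psi(x,y): y is index 0, x is index 1. *)
Inductive constr (S : signature) : Type :=
  | CForallCnt (c : nat) (psi : fo_form S)
  | CCntForall (c : nat) (psi : fo_form S)
  | CCard (p : psym S) (c : nat).

Definition constr_form S (k : constr S) : fo_form S :=
  match k with
  | CForallCnt c psi => FForall (FCnt c psi)
  | CCntForall c psi => FCnt c (FForall psi)
  | CCard p c => FCard p c
  end.

Definition constr_wf S (k : constr S) : bool :=
  match k with
  | CForallCnt _ psi | CCntForall _ psi => is_FO psi && wf_bound 2 psi
  | CCard _ _ => true
  end.

Definition Ups S (s : seq (constr S)) : fo_form S :=
  foldr (fun k f => FAnd (constr_form k) f) FTrue s.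

Definition ext (S : signature) : signature :=
  @Signature (psym S + bool)%type
    (fun q => match q with inl p => ar p | inr b => if b then 2 else 1 end).
Definition UR S : psym (ext S) := inr false.
Definition BR S : psym (ext S) := inr true.

Fixpoint lift_form S (f : fo_form S) : fo_form (ext S) :=
  match f with
  | FTrue => FTrue
  | FAtom p vs => FAtom (inl p : psym (ext S)) vs
  | FEq i j => FEq i j
  | FNot g => FNot (lift_form g)
  | FAnd g h => FAnd (lift_form g) (lift_form h)
  | FOr g h => FOr (lift_form g) (lift_form h)
  | FExists g => FExists (lift_form g)
  | FForall g => FForall (lift_form g)
  | FCnt c g => FCnt c (lift_form g)
  | FCard p c => FCard (inl p : psym (ext S)) c
  end.

Definition ext_w S (R : nzRingType) (w : psym S -> R) : psym (ext S) -> R :=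
  fun q => match q with inl p => w p | inr _ => 1%R end.

Definition WFOMC S (D : finType) (R : nzRingType) (f : fo_form S)
    (w wb : psym S -> R) : R :=
  (\sum_(om : world S D | holds om [::] f)
     \prod_(p : psym S)
        (w p ^+ Ncount om p * wb p ^+ (#|D| ^ ar p - Ncount om p)))%R.

Definition Phi S (R A : psym S) (k : nat) : fo_form (ext S) :=
  let Rx := (inl R : psym (ext S)) in
  let Ax := (inl A : psym (ext S)) in
  FAnd (FForall (FCnt k (FAtom (BR S) [:: 1; 0])))
  (FAnd (FCard (UR S) k)
  (FAnd (FForall (FForall
          (FImp (FAnd (FAtom Ax [:: 1]) (FAtom (BR S) [:: 1; 0]))
                (FAtom (UR S) [:: 0]))))
        (FForall (FForall
          (FImp (FNot (FAtom Ax [:: 1]))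
                (FIff (FAtom Rx [:: 1; 0]) (FAtom (BR S) [:: 1; 0]))))))).

Definition CondAR S (R A : psym S) (k : nat) : fo_form S :=
  FForall (FOr (FAtom A [:: 0]) (FCnt k (FAtom R [:: 1; 0]))).

From HB Require Import structures.
From mathcomp Require Import all_boot all_order all_algebra.
Import Order.TTheory GRing.Theory Num.Theory.

(* Every world om of the extended language restricts to a world
   [restrict om] of L; lifted formulas and the weights (the new predicates
   have weight 1) only see this restriction.  So both sides of the identity
   are sums over worlds om0 of L, and the right-hand side weighs om0 by the
   size of its fiber: the extensions of om0 satisfying Phi.

   The heart of the proof is the count of this fiber ([card_Phi_fiber]):
   Phi forces B^R(x,.) to be R(x,.) when ~A(x) and to be the k-set U^R when
   A(x).  Hence a Phi-extension of om0 is [extend om0 U] for a k-subset U,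
   it exists only if om0 satisfies CondAR, and then every k-subset U works;
   the fiber has 'C(|D|, k) elements or none.  Summing over the fibers
   ([sum_by_restriction]) and dividing by 'C(|D|, k) gives the theorem. *)

Definition weight {S : signature} {D : finType} {F : nzRingType}
    (w wb : psym S -> F) (om : world S D) : F :=
  (\prod_(p : psym S)
     (w p ^+ Ncount om p * wb p ^+ (#|D| ^ ar p - Ncount om p)))%R.

Section Restriction.

Context {L : signature} {D : finType}.

Definition lift_atom (a : gatom L D) : gatom (ext L) D :=
  @Tagged (psym (ext L)) (inl (tag a)) (fun q => (ar q).-tuple D) (tagged a).

Definition restrict (om : world (ext L) D) : world L D :=
  [set a | lift_atom a \in om].

Lemma Ncount_restrict (om : world (ext L) D) (p : psym L) :
  Ncount om (inl p : psym (ext L)) = Ncount (restrict om) p.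
Proof. by apply: eq_card => t; rewrite !inE. Qed.

Lemma holds_lift (om : world (ext L) D) (f : fo_form L) (e : seq D) :
  holds om e (lift_form f) = holds (restrict om) e f.
Proof.
elim: f e => //= [p vs|f IH|f IHf g IHg|f IHf g IHg|f IH|f IH|c f IH|p c] e.
- by apply: eq_existsb => t; rewrite inE.
- by rewrite IH.
- by rewrite IHf IHg.
- by rewrite IHf IHg.
- by apply: eq_existsb => d; rewrite IH.
- by apply: eq_forallb => d; rewrite IH.
- by congr (_ == _); apply: eq_card => d; rewrite !inE IH.
- by rewrite Ncount_restrict.
Qed.

Local Open Scope ring_scope.

(* Since U^R and B^R have weights 1, an extended world weighs as much as
   its restriction. *)
Lemma weight_ext (F : nzRingType) (w wb : psym L -> F) (om : world (ext L) D) :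
  weight (ext_w w) (ext_w wb) om = weight w wb (restrict om).
Proof.
rewrite /weight big_sumType /= [X in _ * X]big1 ?mulr1.
  by apply: eq_bigr => p _; rewrite Ncount_restrict.
by move=> b _; rewrite !expr1n mulr1.
Qed.

Lemma sum_by_restriction (F : nzRingType) (w wb : psym L -> F)
    (P : pred (world L D)) (Q : pred (world (ext L) D)) :
  \sum_(om | P (restrict om) && Q om) weight (ext_w w) (ext_w wb) om =
  \sum_(om0 | P om0)
     weight w wb om0 *+ #|[set om | (restrict om == om0) && Q om]|.
Proof.
rewrite (partition_big restrict P) => [|om /andP[] //].
apply: eq_bigr => om0 P_om0; rewrite -sumr_const [LHS]big_mkcond [RHS]big_mkcond.
apply: eq_bigr => om _; rewrite inE.
by case: eqP => [res_om|_]; rewrite ?andbF ?andbT // weight_ext res_om P_om0.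
Qed.

End Restriction.

Section Tuples.

Context {D : finType}.

Lemma tuple1E (t : 1.-tuple D) : t = [tuple thead t].
Proof. by apply: val_inj; case: t => [[|a [|b s]]]. Qed.

Lemma tuple2E (t : 2.-tuple D) : t = [tuple tnth t ord0; tnth t ord_max].
Proof. by apply: val_inj; case: t => [[|a [|b [|c s]]]]. Qed.

Lemma exists_tuple1 (P : pred (1.-tuple D)) (y : D) :
  [exists t : 1.-tuple D, (map Some (val t) == [:: Some y]) && P t] =
  P [tuple y].
Proof.
apply/existsP/idP => [[t /andP[/eqP eq_t]]|Py]; last by exists [tuple y]; rewrite eqxx.
suff -> : t = [tuple y] by [].
by apply: val_inj; move: eq_t; case: t => [[|a [|b s]]] //= _ [->].
Qed.

Lemma exists_tuple2 (P : pred (2.-tuple D)) (x y : D) :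
  [exists t : 2.-tuple D, (map Some (val t) == [:: Some x; Some y]) && P t] =
  P [tuple x; y].
Proof.
apply/existsP/idP => [[t /andP[/eqP eq_t]]|Pxy]; last by exists [tuple x; y]; rewrite eqxx.
suff -> : t = [tuple x; y] by [].
by apply: val_inj; move: eq_t; case: t => [[|a [|b [|c s]]]] //= _ [-> ->].
Qed.

End Tuples.

Section ExtendedWorlds.

Context {L : signature} {D : finType}.
Variables (R A : psym L) (k : nat).

Definition U_atom (y : D) : gatom (ext L) D :=
  @Tagged (psym (ext L)) (UR L) (fun q => (ar q).-tuple D) [tuple y].
Definition B_atom (x y : D) : gatom (ext L) D :=
  @Tagged (psym (ext L)) (BR L) (fun q => (ar q).-tuple D) [tuple x; y].

Definition U_set (om : world (ext L) D) : {set D} := [set y | U_atom y \in om].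
Definition B_row (om : world (ext L) D) (x : D) : {set D} :=
  [set y | B_atom x y \in om].

Definition A_holds (om0 : world L D) (x : D) : bool :=
  holds om0 [:: x] (FAtom A [:: 0]).
Definition R_holds (om0 : world L D) (x y : D) : bool :=
  holds om0 [:: y; x] (FAtom R [:: 1; 0]).

Lemma Ncount_UR (om : world (ext L) D) : Ncount om (UR L) = #|U_set om|.
Proof.
have inj_tuple1 : injective (fun y : D => [tuple y]).
  by move=> a b /(congr1 (@thead 0 D)).
rewrite /Ncount -(card_imset _ inj_tuple1); apply: eq_card => t; rewrite inE.
apply/idP/imsetP => [t_in|[y]]; last by rewrite inE => y_in ->.
by exists (thead t); rewrite ?inE /U_atom -tuple1E.
Qed.

Lemma Phi_holds (om : world (ext L) D) :
  holds om [::] (Phi R A k) =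
  [&& [forall x, #|B_row om x| == k], #|U_set om| == k,
      [forall x, forall y,
         A_holds (restrict om) x && (y \in B_row om x) ==> (y \in U_set om)] &
      [forall x, forall y, ~~ A_holds (restrict om) x ==>
         ((y \in B_row om x) == R_holds (restrict om) x y)]].
Proof.
have A_lift x y : holds om [:: y; x] (FAtom (inl A : psym (ext L)) [:: 1]) =
                  A_holds (restrict om) x by rewrite /A_holds -holds_lift.
have R_lift x y : holds om [:: y; x] (FAtom (inl R : psym (ext L)) [:: 1; 0]) =
                  R_holds (restrict om) x y by rewrite /R_holds -holds_lift.
have B_atomE x y : holds om [:: y; x] (FAtom (BR L) [:: 1; 0]) =
                   (y \in B_row om x) by rewrite /= exists_tuple2 inE.
have U_atomE x y : holds om [:: y; x] (FAtom (UR L) [:: 0]) =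
                   (y \in U_set om) by rewrite /= exists_tuple1 inE.
have imp_iffE (a b c : bool) :
    (~~ a ==> (b == c)) = ~~ ~~ a || ((~~ c || b) && (~~ b || c)).
  by case: a; case: b; case: c.
rewrite /Phi /= -Ncount_UR; congr [&& _, _, _ & _].
- by apply: eq_forallb => x; congr (_ == _); apply: eq_card => y;
    rewrite inE -B_atomE.
- apply: eq_forallb => x; apply: eq_forallb => y.
  by rewrite -(A_lift x y) -(B_atomE x y) -(U_atomE x y) implybE.
- apply: eq_forallb => x; apply: eq_forallb => y.
  by rewrite -(A_lift x y) -(B_atomE x y) -(R_lift x y) imp_iffE.
Qed.

Lemma CondAR_holds (om0 : world L D) :
  holds om0 [::] (CondAR R A k) =
  [forall x, A_holds om0 x || (#|[set y | R_holds om0 x y]| == k)].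
Proof. by []. Qed.

Definition forced_B (om0 : world L D) (U : {set D}) (x y : D) : bool :=
  if A_holds om0 x then y \in U else R_holds om0 x y.

(* Membership of a ground atom in [extend om0 U], by cases on its predicate:
   L-atoms as in om0, U^R as U, B^R as [forced_B]. *)
Definition extend_pred (om0 : world L D) (U : {set D})
    (a : gatom (ext L) D) : bool :=
  let: existT q t := a in
  (match q as q0 return (ar (q0 : psym (ext L))).-tuple D -> bool with
   | inl p => fun t =>
       @Tagged (psym L) p (fun q => (ar q).-tuple D) (t : (ar p).-tuple D) \in om0
   | inr b => if b as b0 return (ar (inr b0 : psym (ext L))).-tuple D -> bool
              then fun t => forced_B om0 U (tnth (t : 2.-tuple D) ord0)
                                          (tnth (t : 2.-tuple D) ord_max)
              else fun t => thead (t : 1.-tuple D) \in U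
   end) t.

Definition extend (om0 : world L D) (U : {set D}) : world (ext L) D :=
  [set a | extend_pred om0 U a].

Lemma restrict_extend om0 U : restrict (extend om0 U) = om0.
Proof. by apply/setP => -[p t]; rewrite !inE. Qed.

Lemma U_set_extend om0 U : U_set (extend om0 U) = U.
Proof. by apply/setP => y; rewrite !inE. Qed.

Lemma B_row_extend om0 U x y : (y \in B_row (extend om0 U) x) = forced_B om0 U x y.
Proof. by rewrite !inE. Qed.

Lemma ext_world_eq (om1 om2 : world (ext L) D) :
  restrict om1 = restrict om2 -> U_set om1 = U_set om2 ->
  (forall x, B_row om1 x = B_row om2 x) -> om1 = om2.
Proof.
move=> eq_res eq_U eq_B; apply/setP => -[[p|[|]] t].
- move/setP: eq_res => /(_ (Tagged (fun q => (ar q).-tuple D) (t : (ar p).-tuple D))).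
  by rewrite !inE.
- rewrite (tuple2E t).
  by move/setP: (eq_B (tnth t ord0)) => /(_ (tnth t ord_max)); rewrite !inE.
- by rewrite (tuple1E t); move/setP: eq_U => /(_ (thead t)); rewrite !inE.
Qed.

Lemma extend_inj om0 : injective (extend om0).
Proof. by move=> U1 U2 /(congr1 U_set); rewrite !U_set_extend. Qed.

(* In a Phi-world, the row B^R(x,.) of an A-element x is exactly U^R:
   it is a k-subset of the k-set U^R. *)
Lemma Phi_B_row_A (om : world (ext L) D) (x : D) :
  holds om [::] (Phi R A k) -> A_holds (restrict om) x -> B_row om x = U_set om.
Proof.
rewrite Phi_holds => /and4P[/forallP card_B /eqP card_U /forallP B_sub_U _] Ax.
apply/eqP; rewrite eqEcard card_U (eqP (card_B x)) leqnn andbT.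
by apply/subsetP => y y_B; move/forallP/(_ y): (B_sub_U x); rewrite Ax y_B.
Qed.

Lemma Phi_B_row_notA (om : world (ext L) D) (x y : D) :
  holds om [::] (Phi R A k) -> ~~ A_holds (restrict om) x ->
  (y \in B_row om x) = R_holds (restrict om) x y.
Proof.
rewrite Phi_holds => /and4P[_ _ _ /forallP B_eq_R] nAx.
by move/forallP/(_ y): (B_eq_R x); rewrite nAx => /eqP.
Qed.

Lemma Phi_world_extend (om : world (ext L) D) :
  holds om [::] (Phi R A k) -> om = extend (restrict om) (U_set om).
Proof.
move=> Phi_om; apply: ext_world_eq => [||x].
- by rewrite restrict_extend.
- by rewrite U_set_extend.
apply/setP => y; rewrite B_row_extend /forced_B.
case Ax: (A_holds (restrict om) x); first by rewrite Phi_B_row_A.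
by rewrite Phi_B_row_notA ?Ax.
Qed.

(* The restriction of a Phi-world satisfies CondAR: the row R(x,.) of a
   non-A element x is the k-set B^R(x,.). *)
Lemma Phi_world_CondAR (om : world (ext L) D) :
  holds om [::] (Phi R A k) -> holds (restrict om) [::] (CondAR R A k).
Proof.
move=> Phi_om; rewrite CondAR_holds; apply/forallP => x.
case Ax: (A_holds (restrict om) x) => //=.
have := Phi_om; rewrite Phi_holds => /and4P[/forallP card_B _ _ _].
rewrite -(eqP (card_B x)); apply/eqP/eq_card => y.
by rewrite [LHS]inE Phi_B_row_notA ?Ax.
Qed.

Lemma extend_Phi (om0 : world L D) (U : {set D}) :
  holds om0 [::] (CondAR R A k) -> #|U| = k -> holds (extend om0 U) [::] (Phi R A k).
Proof.
rewrite CondAR_holds => /forallP cond card_U.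
rewrite Phi_holds restrict_extend U_set_extend card_U eqxx /=.
apply/and3P; split; apply/forallP => x; last 2 first.
- apply/forallP => y; rewrite B_row_extend /forced_B.
  by case: (A_holds om0 x); rewrite ?implybb.
- apply/forallP => y; rewrite B_row_extend /forced_B.
  by case: (A_holds om0 x); rewrite //= eqxx.
rewrite -card_U; apply/eqP; case Ax: (A_holds om0 x).
  by apply: eq_card => y; rewrite B_row_extend /forced_B Ax.
have := cond x; rewrite Ax -card_U => /eqP <-.
by apply: eq_card => y; rewrite B_row_extend inE /forced_B Ax.
Qed.

Lemma card_Phi_fiber (om0 : world L D) :
  #|[set om | (restrict om == om0) && holds om [::] (Phi R A k)]| =
  if holds om0 [::] (CondAR R A k) then 'C(#|D|, k) else 0.
Proof.
case cond: (holds om0 [::] (CondAR R A k)); last first.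
  apply/eqP; rewrite cards_eq0; apply/eqP/setP => om; rewrite !inE.
  apply/negbTE/andP => -[/eqP res_om /Phi_world_CondAR].
  by rewrite res_om cond.
rewrite -card_draws -(card_imset _ (@extend_inj om0)); apply: eq_card => om.
rewrite inE; apply/andP/imsetP => [[/eqP res_om Phi_om]|[U]].
  exists (U_set om); last by rewrite -res_om; apply: Phi_world_extend.
  by move: Phi_om; rewrite inE Phi_holds => /and4P[].
rewrite inE => /eqP card_U ->.
by rewrite restrict_extend eqxx extend_Phi.
Qed.

End ExtendedWorlds.

Local Open Scope ring_scope.

Theorem lemma4 (L : signature) (D : finType) (R A : psym L) (k : nat)
  (Gamma : fo_form L) (Upsilon : seq (constr L))
  (F : numFieldType) (w wb : psym L -> F) :
  ar R = 2%N -> ar A = 1%N -> (k <= #|D|)%N ->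
  FO_sentence Gamma -> all (@constr_wf L) Upsilon ->
  WFOMC D (FAnd Gamma (FAnd (Ups Upsilon) (CondAR R A k))) w wb =
  ('C(#|D|, k)%:R)^-1 *
  WFOMC D (FAnd (lift_form Gamma) (FAnd (lift_form (Ups Upsilon)) (Phi R A k)))
        (ext_w w) (ext_w wb).
Proof.
move=> _ _ k_le_D _ _.
pose base (om0 : world L D) := holds om0 [::] Gamma && holds om0 [::] (Ups Upsilon).
have split_ext : forall om : world (ext L) D,
    holds om [::] (FAnd (lift_form Gamma) (FAnd (lift_form (Ups Upsilon)) (Phi R A k)))
    = base (restrict om) && holds om [::] (Phi R A k).
  by move=> om; rewrite /= !holds_lift andbA.
(* Sum the right-hand side fiberwise; each fiber contributes 'C(|D|, k)
   copies of the weight of a world satisfying CondAR, and none otherwise. *)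
rewrite /WFOMC (eq_bigl _ _ split_ext) sum_by_restriction.
under [in RHS]eq_bigr => om0 _ do
  rewrite card_Phi_fiber (fun_if (fun n => weight w wb om0 *+ n)) mulr0n.
rewrite -big_mkcondr sumrMnl -[X in _ * X]mulr_natr mulrC mulfK; last first.
  by rewrite pnatr_eq0 -lt0n bin_gt0.
by apply: eq_bigl => om0; rewrite /base /= andbA.
Qed.
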